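(* Suppose $n\ge 3k$ and let $U_1,\dots,U_{\binom nk},V_1,\dots,V_n\in\mathbb{R}^d$ be a margin-$m$, relative-bias-$0$ embedding of $S_{n,k}$ in dimension $d$. Let $V\in\mathbb{R}^{d\times n}$ be the matrix with columns $V_1,\dots,V_n$. Then every $x\in\mathbb{R}^n$ with at most $k$ nonzero coordinates satisfies $\|Vx\|_2\ge m\|x\|_1$.
   Context: $S_{n,k}\in\{0,1\}^{\binom{n}{k}\times n}$ is the matrix whose rows are all the distinct vectors in $\{0,1\}^n$ with exactly $k$ ones, each appearing exactly once. For $A\in\{0,1\}^{N\times n}$ and $m\ge0$, unit vectors $U_1,\dots,U_N,V_1,\dots,V_n\in\mathbb{R}^d$ form a margin-$m$, relative-bias-$0$ embedding of $A$ if $\langle U_j,V_i\rangle\ge m$ whenever $A_{ji}=1$ and $\langle U_j,V_i\rangle\le -m$ whenever $A_{ji}=0$. *)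

From HB Require Import structures.
From mathcomp Require Import all_boot all_order all_algebra.
From mathcomp Require Export reals.
From mathcomp Require Export all_boot all_order all_algebra.
Set Implicit Arguments. Unset Strict Implicit. Unset Printing Implicit Defensive.
Import Order.TTheory GRing.Theory Num.Theory.
Local Open Scope ring_scope.

Definition dotv (R : realType) (d : nat) (u v : 'cV[R]_d) : R :=
  \sum_(l < d) u l ord0 * v l ord0.

Definition norm2 (R : realType) (d : nat) (u : 'cV[R]_d) : R :=
  Num.sqrt (\sum_(l < d) u l ord0 ^+ 2).

Definition norm1 (R : realType) (n : nat) (x : 'cV[R]_n) : R :=
  \sum_(i < n) `|x i ord0|.

Definition unit_vec (R : realType) (d : nat) (u : 'cV[R]_d) : Prop :=
  norm2 u = 1.

(* The rows of S_{n,k} are in bijection with the k-subsets A of {0..n-1}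
   (row indicator vector of A). Row U_A is thus indexed by A : {set 'I_n}
   with #|A| = k, and (S_{n,k})_{A,i} = 1 iff i \in A. *)
Definition margin_embedding_Snk (R : realType) (n k d : nat) (m : R)
    (U : {set 'I_n} -> 'cV[R]_d) (V : 'M[R]_(d, n)) : Prop :=
  (forall A : {set 'I_n}, #|A| = k -> unit_vec (U A)) /\
  (forall i : 'I_n, unit_vec (col i V)) /\
  (forall (A : {set 'I_n}) (i : 'I_n), #|A| = k ->
      (i \in A -> m <= dotv (U A) (col i V)) /\
      (i \notin A -> dotv (U A) (col i V) <= - m)).

(* Split the support of x by sign and pick a k-set A containing every index
   where x is positive and none where it is negative (this only needs n >= 2k).
   The margin conditions then give m |x_i| <= x_i <U_A, V_i> for every i, and
   summing, m ||x||_1 <= <U_A, V x> <= ||V x||_2 by Cauchy-Schwarz, as U_A is a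
   unit vector. *)
From mathcomp Require Import all_boot all_order all_algebra reals.
From mathcomp Require Import ring lra zify.
Set Implicit Arguments. Unset Strict Implicit. Unset Printing Implicit Defensive.
Import Order.TTheory GRing.Theory Num.Theory.
Local Open Scope ring_scope.

Lemma exists_subset_card (T : finType) (B : {set T}) (k : nat) :
  (k <= #|B|)%N -> exists2 A : {set T}, A \subset B & #|A| = k.
Proof.
move=> leqkB.
have : (0 < #|[set A : {set T} | A \subset B & #|A| == k]|)%N.
  by rewrite cards_draws bin_gt0.
by case/card_gt0P => A; rewrite inE => /andP [subAB /eqP cardA]; exists A.
Qed.

Lemma exists_card_between (T : finType) (B C : {set T}) (k : nat) :
  B \subset C -> (#|B| <= k)%N -> (k <= #|C|)%N ->
  exists A : {set T}, [/\ B \subset A, A \subset C & #|A| = k].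
Proof.
move=> subBC leBk lekC.
have : (k - #|B| <= #|C :\: B|)%N by rewrite cardsD (setIidPr subBC) leq_sub2r.
move=> /exists_subset_card [D subD cardD].
exists (B :|: D); split; first exact: subsetUl.
  by rewrite subUset subBC (subset_trans subD) // subsetDl.
have disjBD : [disjoint B & D].
  by rewrite disjoint_sym disjoints_subset (subset_trans subD) // setDE subsetIr.
by rewrite cardsU (disjoint_setI0 disjBD) cards0 subn0 cardD subnKC.
Qed.

Lemma exists_sign_compatible_set (R : realDomainType) (T : finType)
    (f : T -> R) (k : nat) :
  (#|[set i | f i != 0%R]| <= k)%N -> (2 * k <= #|T|)%N ->
  exists A : {set T},
    [/\ #|A| = k, forall i, 0 < f i -> i \in A & forall i, f i < 0 -> i \notin A].
Proof.
move=> supp_k twok_T.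
set P := [set i | 0 < f i]; set C := [set i | 0 <= f i].
have subPC : P \subset C by apply/subsetP => i; rewrite !inE; exact: ltW.
have subPsupp : P \subset [set i | f i != 0%R].
  by apply/subsetP => i; rewrite !inE => /gt_eqF ->.
have subCsupp : ~: C \subset [set i | f i != 0%R].
  by apply/subsetP => i; rewrite !inE -ltNge => /lt_eqF ->.
have cardP := leq_trans (subset_leq_card subPsupp) supp_k.
have cardC : (k <= #|C|)%N.
  have := leq_trans (subset_leq_card subCsupp) supp_k.
  rewrite cardsCs setCK; lia.
have [A [subPA subAC cardA]] := exists_card_between subPC cardP cardC.
exists A; split => // i fi.
  by apply: (subsetP subPA); rewrite inE.
by apply: contraTN fi => /(subsetP subAC); rewrite inE -leNgt.
Qed.

Lemma margin_mul_le (R : realDomainType) (m a xi : R) :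
  0 <= m -> (0 < xi -> m <= a) -> (xi < 0 -> a <= - m) -> m * `|xi| <= xi * a.
Proof.
move=> m_ge0 pos neg; have [xi_lt0|xi_gt0|->] := ltrgtP xi 0.
- by have := neg xi_lt0; rewrite ltr0_norm //; nra.
- by have := pos xi_gt0; rewrite gtr0_norm //; nra.
- by rewrite normr0 mulr0 mul0r.
Qed.

Section DotProduct.
Variables (R : realType) (d : nat).
Implicit Types u w : 'cV[R]_d.

Lemma norm2E w : norm2 w = Num.sqrt (dotv w w).
Proof. by rewrite /norm2 /dotv; under eq_bigr do rewrite expr2. Qed.

Lemma dotvv_ge0 w : 0 <= dotv w w.
Proof. by apply: sumr_ge0 => l _; rewrite -expr2 sqr_ge0. Qed.

Lemma unit_vec_dotvv u : unit_vec u -> dotv u u = 1.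
Proof.
rewrite /unit_vec norm2E => /(congr1 (fun r => r ^+ 2)).
by rewrite sqr_sqrtr ?dotvv_ge0 // expr1n.
Qed.

(* Expand 0 <= |c u - w|^2 at c = <u, w> to get c^2 <= |w|^2. *)
Lemma dotv_le_norm2 w u : unit_vec u -> dotv u w <= norm2 w.
Proof.
move=> /unit_vec_dotvv uu1.
have expand c : \sum_(l < d) (c * u l ord0 - w l ord0) ^+ 2
    = c ^+ 2 * dotv u u - 2 * c * dotv u w + dotv w w.
  rewrite /dotv !mulr_sumr -sumrB -big_split /=.
  by apply: eq_bigr => l _; ring.
set c := dotv u w.
have : 0 <= \sum_(l < d) (c * u l ord0 - w l ord0) ^+ 2.
  by apply: sumr_ge0 => l _; exact: sqr_ge0.
rewrite expand uu1 -/c => expand_ge0.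
rewrite norm2E (le_trans (ler_norm c)) // -sqrtr_sqr ler_wsqrtr //; nra.
Qed.

Lemma dotv_mulmx (n : nat) u (V : 'M[R]_(d, n)) (x : 'cV[R]_n) :
  dotv u (V *m x) = \sum_(i < n) x i ord0 * dotv u (col i V).
Proof.
rewrite /dotv; under eq_bigr do rewrite mxE mulr_sumr.
rewrite exchange_big /=; apply: eq_bigr => i _.
by rewrite mulr_sumr; apply: eq_bigr => l _; rewrite mxE; ring.
Qed.

End DotProduct.

Theorem lemma3p2 (R : realType) (n k d : nat) (m : R)
    (U : {set 'I_n} -> 'cV[R]_d) (V : 'M[R]_(d, n)) :
  (3 * k <= n)%N -> (0 <= m)%R ->
  @margin_embedding_Snk R n k d m U V ->
  forall x : 'cV[R]_n, (#|[set i | x i ord0 != 0%R]| <= k)%N ->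
    (m * norm1 x <= norm2 (V *m x))%R.
Proof.
move=> three_k_n m_ge0 [unitU [_ margin]] x supp_k.
have twok_n : (2 * k <= #|'I_n|)%N by rewrite card_ord; lia.
have [A [cardA posA negA]] :=
  exists_sign_compatible_set (f := fun i => x i ord0) supp_k twok_n.
apply: (le_trans _ (dotv_le_norm2 (V *m x) (unitU A cardA))).
rewrite dotv_mulmx /norm1 mulr_sumr; apply: ler_sum => i _.
have [inA notinA] := margin A i cardA.
by apply: margin_mul_le => // [/posA/inA | /negA/notinA].
Qed.
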